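(* Let $F$ be a graph of diameter $2$, $n=|V(F)|$, $t=\delta(F)$, and let $l>n$ be an integer. Then $\delta_l\le n!\,C_{l-2}^{n-t-2}$.
   Context: All graphs are simple, finite, undirected. The $F$-degree of a vertex $v$ in $G$ is the number of subgraphs of $G$ (not necessarily induced) isomorphic to $F$ and containing $v$. $A_{2l-1}$ is the graph with vertex set $\{1,\dots,2l-1\}$ in which distinct $i,j$ are adjacent iff $|i-j|\le l-1$; $F_{2l}$ is obtained from $A_{2l-1}$ by adding a new vertex $2l$ joined exactly to $1,\dots,t$. $z_i$ is the $F$-degree of $i$ in $A_{2l-1}$, $f_i$ the $F$-degree of $i$ in $F_{2l}$, and $\delta_i=f_i-z_i$. $C_m^k=\frac{m!}{k!(m-k)!}$ for integers $m\ge k\ge 0$, and $C_m^k=0$ otherwise. *)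

From mathcomp Require Import all_boot.
Set Implicit Arguments. Unset Strict Implicit. Unset Printing Implicit Defensive.

Definition simple_graph (V : finType) (adj : rel V) : Prop :=
  symmetric adj /\ irreflexive adj.

Definition diam2 (V : finType) (adj : rel V) : Prop :=
  (forall u v : V, u != v -> adj u v \/ exists w, adj u w /\ adj w v) /\
  (exists u v : V, u != v /\ ~~ adj u v).

Definition mindeg (V : finType) (adj : rel V) : nat :=
  \big[minn/#|V|]_(v : V) #|[set w | adj v w]|.

(* (S, E) is a (not necessarily induced) subgraph of G = (T, adjG), with the
   edge set E stored as a symmetric set of ordered pairs, and it is isomorphic
   to F = (VF, adjF). *)
Definition is_copy (VF T : finType) (adjF : rel VF) (adjG : rel T)
    (S : {set T}) (E : {set T * T}) : bool :=
  [forall x : T * T, (x \in E) ==>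
      [&& x.1 \in S, x.2 \in S, adjG x.1 x.2 & ((x.2, x.1) \in E)]] &&
  [exists f : {ffun VF -> T},
      [&& injectiveb f, f @: setT == S &
          [forall i : VF, forall j : VF, adjF i j == ((f i, f j) \in E)]]].

Definition Fdeg (VF T : finType) (adjF : rel VF) (adjG : rel T) (v : T) : nat :=
  #|[set p : {set T} * {set (T * T)} | is_copy adjF adjG p.1 p.2 && (v \in p.1)]|.

(* Vertices are 0-indexed: ordinal i represents vertex i+1 of the paper. *)
Definition adjA (l : nat) : rel 'I_(2 * l - 1) :=
  fun i j => (i != j) && (i < j + l) && (j < i + l).

(* F_{2l}: A_{2l-1} plus the vertex 2l (ordinal 2l-1) joined to 1..t
   (ordinals 0..t-1). *)
Definition adjFl (l t : nat) : rel 'I_(2 * l) :=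
  fun i j =>
    if (i == 2 * l - 1 :> nat) then (j < t) && (j != 2 * l - 1 :> nat)
    else if (j == 2 * l - 1 :> nat) then i < t
    else (i != j) && (i < j + l) && (j < i + l).
Arguments adjA : clear implicits.
Arguments adjFl : clear implicits.

(** In F_{2l}, split the copies of F through the vertex l according to
    whether they use the new vertex 2l.  Those avoiding it are copies in
    A_{2l-1}.  In a copy using it, the preimage of 2l has at least t = δ(F)
    neighbours, all mapped into the neighbourhood {1,...,t} of 2l, which has
    exactly t vertices; so the vertex set of the copy contains
    {1,...,t, l, 2l}, and as F has diameter 2 every other vertex lies in
    {t+1,...,t+l-1} \ {l}, a set of l-2 vertices.  This leaves at most
    C(l-2, n-t-2) vertex sets, each carrying at most n! copies. *)

From mathcomp Require Import all_boot all_algebra zify.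
Import GRing.Theory Num.Theory.
Set Implicit Arguments. Unset Strict Implicit. Unset Printing Implicit Defensive.

Definition copies (VF T : finType) (adjF : rel VF) (adjG : rel T)
    (P : pred {set T}) : {set {set T} * {set T * T}} :=
  [set p | is_copy adjF adjG p.1 p.2 && P p.1].

Definition image_edges (VF T : finType) (adjF : rel VF) (f : VF -> T) : {set T * T} :=
  [set x | [exists i, exists j, adjF i j && (x == (f i, f j))]].

Lemma mindeg_le_deg (V : finType) (adj : rel V) v :
  mindeg adj <= #|[set w | adj v w]|.
Proof.
rewrite /mindeg; have : v \in index_enum V := mem_index_enum v.
elim: (index_enum V) => // a s IH; rewrite in_cons big_cons => /orP[/eqP<-|vs].
  exact: geq_minl.
exact: leq_trans (geq_minr _ _) (IH vs).
Qed.

Lemma mindeg_le_card (V : finType) (adj : rel V) : mindeg adj <= #|V|.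
Proof.
by rewrite /mindeg; elim/big_rec: _ => // v m _; apply: leq_trans (geq_minr _ _).
Qed.

Lemma diam2_mindeg_gt0 (V : finType) (adj : rel V) : diam2 adj -> 0 < mindeg adj.
Proof.
case=> conn [u [v [uv _]]]; rewrite /mindeg.
apply: (big_ind (fun x => 0 < x)); first by apply/card_gt0P; exists u.
  by move=> x y x0 y0; rewrite leq_min x0 y0.
move=> x _; apply/card_gt0P.
have [y xy] : exists y, x != y.
  by case: (eqVneq x u) => [->|]; [exists v | exists u].
by case: (conn x y xy) => [xy'|[z [xz _]]]; [exists y | exists z]; rewrite inE.
Qed.

Lemma imset_preimset (aT rT : finType) (f : aT -> rT) (A : {set rT}) :
  A \subset codom f -> f @: (f @^-1: A) = A.
Proof.
move=> /subsetP Af; apply/setP => y; apply/imsetP/idP => [[x] | yA].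
  by rewrite inE => fxA ->.
by have /codomP [x yx] := Af y yA; exists x; rewrite ?inE -yx.
Qed.

Lemma card_sandwich_le (T : finType) (K U : {set T}) k :
  #|[set S : {set T} | [&& #|S| == k, K \subset S & S \subset U]]|
    <= 'C(#|U :\: K|, k - #|K|).
Proof.
rewrite -cards_draws -(card_in_imset (f := fun S => S :\: K)); last first.
  move=> S1 S2; rewrite !inE => /and3P[_ KS1 _] /and3P[_ KS2 _] e.
  by rewrite -(setID S1 K) -(setID S2 K) (setIidPr KS1) (setIidPr KS2) e.
apply: subset_leq_card; apply/subsetP => D /imsetP [S].
rewrite inE => /and3P[/eqP cS KS SU] ->.
by rewrite inE setSD //= cardsD (setIidPr KS) cS.
Qed.

Section Copies.
Variables (VF : finType) (adjF : rel VF).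

Lemma is_copy_witness (T : finType) (adjG : rel T) S E :
  is_copy adjF adjG S E ->
  exists f : {ffun VF -> T}, [/\ injective f, f @: setT = S,
     forall i j, adjF i j = ((f i, f j) \in E) &
     forall x, x \in E -> [&& x.1 \in S, x.2 \in S, adjG x.1 x.2 & (x.2, x.1) \in E]].
Proof.
case/andP => /forallP HE /existsP [f /and3P [/injectiveP finj /eqP fS /forallP fE]].
exists f; split=> // [i j|x xE]; first by apply/eqP; have /forallP := fE i.
exact: implyP (HE x) xE.
Qed.

Lemma card_copy (T : finType) (adjG : rel T) S E :
  is_copy adjF adjG S E -> #|S| = #|VF|.
Proof.
by case/is_copy_witness => f [finj <- _ _]; rewrite card_imset // cardsT.
Qed.

Lemma copy_edgesE (T : finType) S (E : {set T * T}) (f : VF -> T) :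
  f @: setT = S -> (forall i j, adjF i j = ((f i, f j) \in E)) ->
  (forall x, x \in E -> (x.1 \in S) && (x.2 \in S)) ->
  E = image_edges adjF f.
Proof.
move=> fS fE HE; apply/setP => x; rewrite inE; apply/idP/existsP.
- move=> xE; have /andP[] := HE x xE; rewrite -fS => /imsetP [i _ e1] /imsetP [j _ e2].
  exists i; apply/existsP; exists j.
  by rewrite fE -e1 -e2 -surjective_pairing xE eqxx.
- by case=> i /existsP [j /andP [aij /eqP ->]]; rewrite -fE.
Qed.

Lemma copy_nbhd_subset (T : finType) (adjG : rel T) S E x :
  is_copy adjF adjG S E -> x \in S ->
  #|[set y | adjG x y]| <= mindeg adjF -> [set y | adjG x y] \subset S.
Proof.
case/is_copy_witness => f [finj fS fE HE]; rewrite -{1}fS => /imsetP [i _ ->] degx.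
have fN : f @: [set j | adjF i j] \subset [set y | adjG (f i) y].
  apply/subsetP => y /imsetP [j]; rewrite inE fE => /HE /and4P[_ _ fij _] ->.
  by rewrite inE.
have <- : f @: [set j | adjF i j] = [set y | adjG (f i) y].
  apply/eqP; rewrite eqEcard fN card_imset //=.
  exact: leq_trans degx (mindeg_le_deg _ _).
by rewrite -fS; apply: imsetS; apply: subsetT.
Qed.

Lemma copy_dist2 (T : finType) (adjG : rel T) S E x y :
  diam2 adjF -> is_copy adjF adjG S E -> x \in S -> y \in S -> x != y ->
  adjG x y \/ exists z, adjG x z /\ adjG z y.
Proof.
case=> conn _ /is_copy_witness [f [finj fS fE HE]].
rewrite -fS => /imsetP [i _ ->] /imsetP [j _ ->] fij.
have hom a b : adjF a b -> adjG (f a) (f b) by rewrite fE => /HE /and4P[].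
have ij : i != j by apply: contraNneq fij => ->.
case: (conn i j ij) => [/hom|[k [/hom ik /hom kj]]]; first by left.
by right; exists (f k).
Qed.

Section Pullback.
Variables (T1 T2 : finType) (h : T1 -> T2) (a1 : rel T1) (a2 : rel T2).
Hypotheses (h_inj : injective h) (h_adj : forall x y, a2 (h x) (h y) = a1 x y).

Let hp (x : T1 * T1) : T2 * T2 := (h x.1, h x.2).

Lemma copy_pullback S E : is_copy adjF a2 S E -> S \subset codom h ->
  [/\ is_copy adjF a1 (h @^-1: S) (hp @^-1: E),
      h @: (h @^-1: S) = S & hp @: (hp @^-1: E) = E].
Proof.
move=> cp /subsetP Sh; have [f [finj fS fE HE]] := is_copy_witness cp.
have fiS i : f i \in S by rewrite -fS imset_f.
pose f1 := [ffun i => iinv (Sh _ (fiS i))].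
have hf1 i : h (f1 i) = f i by rewrite ffunE f_iinv.
split; first (apply/andP; split).
- apply/forallP => x; apply/implyP; rewrite !inE /hp => xE.
  by have /and4P[/= -> -> ] := HE _ xE; rewrite h_adj => -> ->.
- apply/existsP; exists f1; apply/and3P; split.
  + by apply/injectiveP => i j e; apply: finj; rewrite -!hf1 e.
  + apply/eqP/setP => x; rewrite inE -fS; apply/imsetP/imsetP => -[i _ e].
      by exists i; rewrite // e hf1.
    by exists i => //; apply: h_inj; rewrite hf1.
  + by apply/forallP => i; apply/forallP => j; rewrite inE /hp /= !hf1 fE.
- by apply: imset_preimset; apply/subsetP.
- apply: imset_preimset; apply/subsetP => x /HE /and4P[/Sh x1 /Sh x2 _ _].
  apply/codomP; exists (iinv x1, iinv x2).
  by rewrite /hp !f_iinv -surjective_pairing.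
Qed.

Lemma card_copies_codom_le v :
  #|copies adjF a2 (fun S => (h v \in S) && (S \subset codom h))| <= Fdeg adjF a1 v.
Proof.
pose pull (p : {set T2} * {set T2 * T2}) := (h @^-1: p.1, hp @^-1: p.2).
have pullK p : p \in copies adjF a2 (fun S => (h v \in S) && (S \subset codom h)) ->
    (h @: (pull p).1, hp @: (pull p).2) = p.
  case: p => S E; rewrite inE /= => /and3P[cp _ Sh].
  by have [_ -> ->] := copy_pullback cp Sh.
rewrite -(card_in_imset (f := pull)); last first.
  by move=> p q pP qP e; rewrite -(pullK p pP) -(pullK q qP) e.
apply: subset_leq_card; apply/subsetP => q /imsetP [[S E]].
rewrite inE /= => /and3P[cp vS Sh] ->.
have [cp1 _ _] := copy_pullback cp Sh.
by rewrite inE /= cp1 inE.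
Qed.
End Pullback.

Lemma Fdeg_le_split (T : finType) (adjG : rel T) (v w : T) :
  Fdeg adjF adjG v <= #|copies adjF adjG (fun S => (v \in S) && (w \notin S))|
                    + #|copies adjF adjG (fun S => (v \in S) && (w \in S))|.
Proof.
apply: leq_trans (leq_card_setU _ _); apply: subset_leq_card.
by apply/subsetP => p; rewrite !inE; case: (w \in p.1); rewrite ?andbT ?andbF ?orbF.
Qed.

Lemma card_copies_in_le (T : finType) (adjG : rel T) (x0 : T) (G : {set {set T}}) :
  #|copies adjF adjG (fun S => S \in G)| <= #|G| * #|VF|`!.
Proof.
(* A copy is recovered from its vertex set S and the positions in [enum S]
   of the images of the vertices of F. *)
pose InjF := [set s : {ffun VF -> 'I_#|VF|} | injectiveb s].
pose Phi (q : {set T} * {ffun VF -> 'I_#|VF|}) :=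
  (q.1, image_edges adjF (fun i => nth x0 (enum q.1) (q.2 i))).
apply: (@leq_trans #|Phi @: setX G InjF|); last first.
  by rewrite (leq_trans (leq_imset_card _ _)) // cardsX card_inj_ffuns card_ord ffactnn.
apply: subset_leq_card; apply/subsetP => -[S E]; rewrite inE /= => /andP[cp SG].
have [f [finj fS fE HE]] := is_copy_witness cp.
have fiS i : f i \in S by rewrite -fS imset_f.
pose sg := [ffun i => insubd (enum_rank i) (index (f i) (enum S)) : 'I_#|VF|].
have sgK i : nth x0 (enum S) (sg i) = f i.
  have idx_lt : index (f i) (enum S) < #|VF|.
    by rewrite -(card_copy cp) cardE index_mem mem_enum.
  by rewrite ffunE val_insubd idx_lt nth_index ?mem_enum.
apply/imsetP; exists (S, sg).
  rewrite in_setX SG inE; apply/injectiveP => i j e.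
  by apply: finj; rewrite -!sgK e.
rewrite /Phi /= (copy_edgesE fS fE) => [|x /HE /and4P[-> -> _ _] //].
congr pair; apply/setP => x; rewrite !inE.
by apply: eq_existsb => i; apply: eq_existsb => j; rewrite !sgK.
Qed.
End Copies.

Lemma card_ord_lt N k : k <= N -> #|[set y : 'I_N | y < k]| = k.
Proof.
move=> kN; have -> : [set y : 'I_N | y < k] = widen_ord kN @: setT.
  apply/setP => y; rewrite inE; apply/idP/imsetP => [yk | [z _ ->]] /=.
    by exists (Ordinal yk); last apply: val_inj.
  exact: ltn_ord.
rewrite card_imset ?cardsT ?card_ord // => x y /(congr1 val) /= xy.
exact: val_inj.
Qed.

Section ApexGraph.
Variables (l t : nat) (w : 'I_(2 * l)).
Hypothesis w_val : w = 2 * l - 1 :> nat.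

Lemma neq_apexE x : (x != w) = (x != 2 * l - 1 :> nat).
Proof. by rewrite -w_val. Qed.

Lemma adjFl_widen (x y : 'I_(2 * l - 1)) :
  adjFl l t (widen_ord (leq_subr 1 _) x) (widen_ord (leq_subr 1 _) y) = adjA l x y.
Proof. by rewrite /adjFl /adjA /= !ltn_eqF. Qed.

Lemma adjFl_nonapex_lt y z : y != w -> z != w -> adjFl l t y z -> z < y + l.
Proof.
by rewrite !neq_apexE => /negbTE yw /negbTE zw; rewrite /adjFl yw zw => /andP[].
Qed.

Lemma subset_codom_widen (S : {set 'I_(2 * l)}) :
  w \notin S -> S \subset codom (widen_ord (leq_subr 1 (2 * l))).
Proof.
move=> wS; apply/subsetP => y yS.
have : y != w by apply: contraNneq wS => <-.
rewrite neq_apexE /= => yw; have y_lt : y < 2 * l - 1 by have := ltn_ord y; lia.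
by apply/codomP; exists (Ordinal y_lt); apply: val_inj.
Qed.

Lemma card_copies_nonapex_le (VF : finType) (adjF : rel VF) v :
  #|copies adjF (adjFl l t)
      (fun S => (widen_ord (leq_subr 1 (2 * l)) v \in S) && (w \notin S))|
    <= Fdeg adjF (adjA l) v.
Proof.
have h_inj : injective (widen_ord (leq_subr 1 (2 * l))).
  by move=> x y /(congr1 val) xy; apply: val_inj.
apply: leq_trans (card_copies_codom_le adjF h_inj adjFl_widen v).
apply: subset_leq_card; apply/subsetP => p; rewrite !inE => /and3P[-> vS wS].
by rewrite vS subset_codom_widen.
Qed.

Hypothesis t_le_l : t <= l.

Lemma adjFl_apex y : adjFl l t w y = (y < t).
Proof.
rewrite /adjFl w_val eqxx; case: ltnP => //= yt.
by apply/idP/eqP => yw; have := ltn_ord w; lia.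
Qed.

Lemma copy_apex_between (VF : finType) (adjF : rel VF) S E :
  t <= mindeg adjF -> diam2 adjF -> is_copy adjF (adjFl l t) S E -> w \in S ->
  [set y : 'I_(2 * l) | y < t] \subset S /\
  S \subset w |: [set y : 'I_(2 * l) | y < t + l - 1].
Proof.
move=> t_le diamF cp wS.
have nbhd_w : [set y | adjFl l t w y] = [set y : 'I_(2 * l) | y < t].
  by apply/setP => y; rewrite !inE adjFl_apex.
split.
  rewrite -nbhd_w; apply: copy_nbhd_subset cp wS _.
  by rewrite nbhd_w card_ord_lt //; lia.
apply/subsetP => y yS; rewrite !inE; case: (eqVneq y w) => //= yw.
have wy : w != y by rewrite eq_sym.
case: (copy_dist2 diamF cp wS yS wy) => [| [z [wz zy]]]; first by rewrite adjFl_apex; lia.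
rewrite adjFl_apex in wz.
have zw : z != w by apply: contraTneq wz => ->; rewrite w_val; lia.
by have := adjFl_nonapex_lt zw yw zy; lia.
Qed.
End ApexGraph.

Lemma card_copies_apex_le (VF : finType) (adjF : rel VF) l (v w : 'I_(2 * l)) :
  diam2 adjF -> #|VF| < l -> v = l - 1 :> nat -> w = 2 * l - 1 :> nat ->
  #|copies adjF (adjFl l (mindeg adjF)) (fun S => (v \in S) && (w \in S))|
    <= #|VF|`! * 'C(l - 2, #|VF| - mindeg adjF - 2).
Proof.
move=> diamF n_lt v_val w_val; set t := mindeg adjF; set n := #|VF|.
have t_gt0 : 0 < t := diam2_mindeg_gt0 diamF.
have t_le_n : t <= n := mindeg_le_card adjF.
pose Kt := [set y : 'I_(2 * l) | y < t].
pose B := [set y : 'I_(2 * l) | y < t + l - 1].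
pose K := w |: (v |: Kt); pose U := w |: B.
have cardKt : #|Kt| = t by rewrite card_ord_lt //; lia.
have cardB : #|B| = t + l - 1 by rewrite card_ord_lt //; lia.
have v_Kt : v \notin Kt by rewrite inE v_val -leqNgt; lia.
have w_vKt : w \notin v |: Kt.
  rewrite !inE negb_or -(inj_eq val_inj) /= v_val w_val -leqNgt.
  by apply/andP; split; lia.
have w_B : w \notin B by rewrite inE w_val -leqNgt; lia.
have cardK : #|K| = t + 2 by rewrite !cardsU1 w_vKt v_Kt cardKt; lia.
have KU : K \subset U.
  rewrite setUS // subUset sub1set inE v_val /=; apply/andP; split; first lia.
  by apply/subsetP => y; rewrite !inE; lia.
have cardUK : #|U :\: K| = l - 2.
  by rewrite cardsD (setIidPr KU) cardK cardsU1 w_B cardB; lia.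
pose Good := [set S : {set 'I_(2 * l)} | [&& #|S| == n, K \subset S & S \subset U]].
apply: (@leq_trans (#|Good| * n`!)).
  apply: leq_trans (card_copies_in_le adjF (adjFl l t) v Good); apply: subset_leq_card.
  apply/subsetP => -[S E]; rewrite !inE /= => /and3P[cp vS wS]; rewrite cp /=.
  have t_le_l : t <= l := leq_trans t_le_n (ltnW n_lt).
  have [KtS SU] := copy_apex_between w_val t_le_l (leqnn t) diamF cp wS.
  by rewrite (card_copy cp) eqxx SU !subUset !sub1set wS vS KtS.
rewrite mulnC leq_mul2l (leq_trans (card_sandwich_le _ _ _)) ?orbT //.
by rewrite cardUK cardK subnDA.
Qed.

Local Open Scope ring_scope.

Theorem lemma7 (VF : finType) (adjF : rel VF) (l : nat)
    (vA : 'I_(2 * l - 1)) (vF : 'I_(2 * l)) :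
  simple_graph adjF -> diam2 adjF ->
  (#|VF| < l)%N ->
  nat_of_ord vA = (l - 1)%N -> nat_of_ord vF = (l - 1)%N ->
  (Fdeg adjF (adjFl l (mindeg adjF)) vF)%:Z - (Fdeg adjF (adjA l) vA)%:Z
    <= ((#|VF|)`! * 'C(l - 2, #|VF| - mindeg adjF - 2))%:Z.
Proof.
move=> _ diamF n_lt vA_val vF_val; rewrite lerBlDl -PoszD lez_nat.
have [w w_val] : {w : 'I_(2 * l) | w = (2 * l - 1)%N :> nat}.
  have w_lt : (2 * l - 1 < 2 * l)%N by lia.
  by exists (Ordinal w_lt).
have vF_widen : vF = widen_ord (leq_subr 1 (2 * l)) vA.
  by apply: val_inj; rewrite /= vA_val vF_val.
apply: leq_trans (Fdeg_le_split adjF _ vF w) _; apply: leq_add.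
  by rewrite vF_widen; apply: (card_copies_nonapex_le _ w_val).
exact: card_copies_apex_le diamF n_lt vF_val w_val.
Qed.
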